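(* Let $(Y_i,u_i)$, $i\in I$, be ultrametric spaces whose value sets $u_iY_i$ are all contained in a common totally ordered set, and assume that $I$ is finite or that $\bigcup_{i\in I}u_iY_i$ is well ordered. Equip $\prod_{i\in I}Y_i$ with $u((y_i)_{i\in I},(z_i)_{i\in I}):=\min_{i\in I}u_i(y_i,z_i)$. If every $(Y_i,u_i)$ is spherically complete, then so is the direct product $(\prod_{i\in I}Y_i,u)$.
   Context: An ultrametric space $(Y,u)$ is a set with a map $u$ from $Y\times Y$ onto a totally ordered set $\Gamma$ with last element $\infty$ such that $u(y,z)=\infty$ iff $y=z$, $u(y,z)\ge\min\{u(y,x),u(x,z)\}$ and $u(y,z)=u(z,y)$; its value set is $uY=\Gamma\setminus\{\infty\}$. Closed balls are $B_\alpha(y)=\{z:u(y,z)\ge\alpha\}$; a ball is a union of a non-empty collection of closed balls with a common element; a nest of balls is a set of balls totally ordered by inclusion; the space is spherically complete if every nest of balls has non-empty intersection. The map $u$ on the product is an ultrametric with values in $\bigcup_i u_iY_i\cup\{\infty\}$. *)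

From mathcomp Require Import all_boot all_order.
Set Implicit Arguments. Unset Strict Implicit. Unset Printing Implicit Defensive.
Import Order.TTheory.
Local Open Scope order_scope.

Section Ultra.
Variables (d : Order.disp_t) (G : tOrderType d).

(* Ultrametric on Y with values in the totally ordered set G whose last
   element \top plays the role of infinity. *)
Definition is_ultrametric (Y : Type) (u : Y -> Y -> G) : Prop :=
  (forall y z, u y z = \top <-> y = z) /\
  (forall x y z, Order.min (u y x) (u x z) <= u y z) /\
  (forall y z, u y z = u z y).

Definition closed_ball (Y : Type) (u : Y -> Y -> G) (a : G) (y : Y) : Y -> Prop :=
  fun z => a <= u y z.

Definition is_ball (Y : Type) (u : Y -> Y -> G) (B : Y -> Prop) : Prop :=
  exists C : (Y -> Prop) -> Prop,
    (exists b, C b) /\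
    (forall b, C b -> exists a y, b = closed_ball u a y) /\
    (exists x, forall b, C b -> b x) /\
    (forall z, B z <-> exists b, C b /\ b z).

Definition is_nest (Y : Type) (u : Y -> Y -> G) (N : (Y -> Prop) -> Prop) : Prop :=
  (exists B, N B) /\
  (forall B, N B -> is_ball u B) /\
  (forall B1 B2, N B1 -> N B2 ->
     (forall z, B1 z -> B2 z) \/ (forall z, B2 z -> B1 z)).

Definition spherically_complete (Y : Type) (u : Y -> Y -> G) : Prop :=
  forall N, is_nest u N -> exists y, forall B, N B -> B y.

Definition union_value_set (I : Type) (Y : I -> Type)
  (u : forall i, Y i -> Y i -> G) : G -> Prop :=
  fun a => exists i (y z : Y i), y <> z /\ u i y z = a.

Definition well_ordered_subset (S : G -> Prop) : Prop :=
  forall T : G -> Prop, (forall a, T a -> S a) -> (exists a, T a) ->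
    exists m, T m /\ forall a, T a -> m <= a.

(* up y z is the minimum of {u_i (y i) (z i) | i in I} (= \top if I is empty) *)
Definition is_product_min (I : Type) (Y : I -> Type)
  (u : forall i, Y i -> Y i -> G)
  (up : (forall i, Y i) -> (forall i, Y i) -> G) : Prop :=
  forall y z,
    (up y z = \top \/ exists i, up y z = u i (y i) (z i)) /\
    (forall i, up y z <= u i (y i) (z i)).

End Ultra.

(** A nest of balls in the product projects, coordinate by coordinate, to a
    nest of balls in each factor; pick a point [y i] in the intersection of
    the [i]-th projected nest.  To see that [y] lies in a ball [B] of the nest,
    write [B] as a union of closed balls around a common point [x].  Each
    coordinate [i] yields one of these closed balls whose radius is at most
    [u i (x i) (y i)]; the minimum [u x y] is attained at some coordinate [j]
    (or is infinite), and the closed ball obtained for [j] contains [y]. *)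

From Stdlib Require List.
From Stdlib Require Import ClassicalEpsilon Eqdep.
From mathcomp Require Import all_boot all_order.
Import Order.TTheory.
Local Open Scope order_scope.

Section FunctionUpdate.
Variables (I : Type) (Y : I -> Type).

Definition fupdate (x : forall j, Y j) {i : I} (w : Y i) : forall j, Y j :=
  fun j => match excluded_middle_informative (i = j) with
           | left e => eq_rect i Y w j e
           | right _ => x j
           end.

Lemma fupdate_at (x : forall j, Y j) i (w : Y i) : fupdate x w i = w.
Proof.
by rewrite /fupdate; case: excluded_middle_informative => // e; rewrite (UIP_refl _ _ e).
Qed.

Lemma fupdate_ind (P : forall j, Y j -> Prop) (x : forall j, Y j) i (w : Y i) :
  P i w -> (forall j, P j (x j)) -> forall j, P j (fupdate x w j).
Proof.
move=> Pw Px j; rewrite /fupdate.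
by case: excluded_middle_informative => [e|_] //; subst j.
Qed.

End FunctionUpdate.

Arguments fupdate {I Y} x {i} w.
Arguments fupdate_at {I Y} x {i} w.
Arguments fupdate_ind {I Y} P {x i w}.

Section Ultrametric.
Variables (d : Order.disp_t) (G : tOrderType d) (Y : Type) (u : Y -> Y -> G).
Hypothesis ultra_u : is_ultrametric u.

Lemma ultra_refl y : u y y = \top.
Proof. by case: ultra_u => uP _; apply/uP. Qed.

Lemma ultra_sym y z : u y z = u z y.
Proof. by case: ultra_u => _ [_ ->]. Qed.

Lemma ultra_le_trans a x y z : a <= u y x -> a <= u x z -> a <= u y z.
Proof.
case: ultra_u => _ [uT _] le_a_yx le_a_xz.
by apply: le_trans (uT x y z); rewrite le_min le_a_yx le_a_xz.
Qed.

End Ultrametric.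

Arguments ultra_refl {d G Y u}.
Arguments ultra_sym {d G Y u}.
Arguments ultra_le_trans {d G Y u} ultra_u {a} x {y z}.

Section Product.
Variables (d : Order.disp_t) (G : tOrderType d) (I : Type) (Y : I -> Type).
Variables (u : forall i, Y i -> Y i -> G)
          (up : (forall i, Y i) -> (forall i, Y i) -> G).
Hypothesis ultra_u : forall i, is_ultrametric (u i).
Hypothesis up_min : is_product_min u up.

Lemma le_product_min a v w : a <= up v w <-> forall i, a <= u i (v i) (w i).
Proof.
have [up_attained up_le] := up_min v w.
split => [le_a i|le_a]; first exact: le_trans le_a (up_le i).
by case: up_attained => [->|[j ->]]; rewrite ?lex1.
Qed.

Lemma product_le_trans a x y z : a <= up y x -> a <= up x z -> a <= up y z.
Proof.
move=> /le_product_min le_a_yx /le_product_min le_a_xz.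
by apply/le_product_min => i; apply: ultra_le_trans (le_a_yx i) (le_a_xz i).
Qed.

Lemma closed_ball_coord i a y0 z :
  closed_ball up a y0 z -> closed_ball (u i) a (y0 i) (z i).
Proof. by rewrite /closed_ball => /le_product_min. Qed.

Definition proj_set i (B : (forall j, Y j) -> Prop) : Y i -> Prop :=
  fun w => exists z, B z /\ z i = w.

Lemma proj_closed_ball i a y0 w :
  proj_set i (closed_ball up a y0) w <-> closed_ball (u i) a (y0 i) w.
Proof.
split => [[z [/(closed_ball_coord i) ball_z <-]] //|le_a].
exists (fupdate y0 w); rewrite fupdate_at; split => //.
apply/le_product_min; apply: (fupdate_ind (fun j v => a <= u j (y0 j) v)) => // j.
by rewrite ultra_refl // lex1.
Qed.

Lemma proj_ball i B : is_ball up B -> is_ball (u i) (proj_set i B).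
Proof.
case=> C [[b0 Cb0] [C_closed [[x Cx] BC]]].
exists (fun b => exists a y0, C (closed_ball up a y0) /\
                 b = closed_ball (u i) a (y0 i)).
split; [|split; [|split]].
- have [a [y0 Eb0]] := C_closed b0 Cb0; subst b0.
  by exists (closed_ball (u i) a (y0 i)), a, y0.
- by move=> b [a [y0 [_ ->]]]; exists a, (y0 i).
- exists (x i) => b [a [y0 [Cb ->]]].
  exact: closed_ball_coord (Cx _ Cb).
- move=> w; split.
  + move=> [z [/BC [b [Cb bz]] <-]].
    have [a [y0 Eb]] := C_closed b Cb; subst b.
    exists (closed_ball (u i) a (y0 i)); split; first by exists a, y0.
    by apply/proj_closed_ball; exists z.
  + move=> [_ [[a [y0 [Cb ->]]] /proj_closed_ball [z [bz <-]]]].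
    by exists z; split => //; apply/BC; exists (closed_ball up a y0).
Qed.

Definition proj_nest i (N : ((forall j, Y j) -> Prop) -> Prop) :
    (Y i -> Prop) -> Prop :=
  fun S => exists B, N B /\ forall w, S w <-> proj_set i B w.

Lemma proj_is_nest i N : is_nest up N -> is_nest (u i) (proj_nest i N).
Proof.
case=> [[B0 NB0] [N_ball N_total]]; split; [|split].
- by exists (proj_set i B0), B0.
- move=> S [B [NB SB]].
  have [C [C0 [C_closed [Cx BC]]]] := proj_ball i _ (N_ball B NB).
  by exists C; do 3!split => //; move=> w; rewrite SB.
- move=> S1 S2 [B1 [NB1 SB1]] [B2 [NB2 SB2]].
  by case: (N_total B1 B2 NB1 NB2) => sub; [left|right] => w;
    rewrite SB1 SB2 => -[z [Bz <-]]; exists z; split => //; apply: sub.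
Qed.

Lemma ball_mem_of_proj B y :
  is_ball up B -> (forall i, proj_set i B (y i)) -> B y.
Proof.
case=> C [[b0 Cb0] [C_closed [[x Cx] BC]]] By.
have radius_le i : exists a y0, C (closed_ball up a y0) /\ a <= u i (x i) (y i).
  have [z [/BC [b [Cb bz]] <-]] := By i.
  have [a [y0 Eb]] := C_closed b Cb; subst b.
  exists a, y0; split => //; apply: (ultra_le_trans (ultra_u i) (y0 i)).
    by rewrite (ultra_sym (ultra_u i)); apply: closed_ball_coord (Cx _ Cb).
  exact: closed_ball_coord bz.
have [a [y0 [Cb le_a_xy]]] : exists a y0, C (closed_ball up a y0) /\ a <= up x y.
  have [[->|[j ->]] _] := up_min x y; last exact: radius_le.
  have [a [y0 Eb0]] := C_closed b0 Cb0; subst b0.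
  by exists a, y0; rewrite lex1.
apply/BC; exists (closed_ball up a y0); split => //.
exact: product_le_trans (Cx _ Cb) le_a_xy.
Qed.

End Product.

Arguments proj_set {I Y} i B _.
Arguments proj_is_nest {d G I Y u up} ultra_u up_min i {N}.
Arguments ball_mem_of_proj {d G I Y u up} ultra_u up_min {B y}.

Theorem proposition10 (d : Order.disp_t) (G : tOrderType d)
  (I : Type) (Y : I -> Type) (u : forall i, Y i -> Y i -> G)
  (up : (forall i, Y i) -> (forall i, Y i) -> G) :
  (forall i, is_ultrametric (u i)) ->
  ((exists s : seq I, forall i, List.In i s) \/
   well_ordered_subset (union_value_set u)) ->
  is_product_min u up ->
  (forall i, spherically_complete (u i)) ->
  spherically_complete up.
Proof.
(* The finiteness/well-order hypothesis only serves to make the minimum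
   defining [up] exist, and [is_product_min] already provides it. *)
move=> ultra_u _ up_min complete_u N nestN.
have common_proj i : exists yi, forall B, N B -> proj_set i B yi.
  have [yi yiP] := complete_u i _ (proj_is_nest ultra_u up_min i nestN).
  by exists yi => B NB; apply/(yiP (proj_set i B)); exists B.
pose y i := proj1_sig (constructive_indefinite_description _ (common_proj i)).
exists y => B NB; apply: (ball_mem_of_proj ultra_u up_min (proj1 (proj2 nestN) B NB)).
by move=> i; rewrite /y; case: constructive_indefinite_description => yi; apply.
Qed.
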